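(* Let $L$ be a multi-adjoint lattice, let $\mathcal{P}$ be an sMALP program over $L$, and let $\mathcal{Q}$ be a goal. Then for every symbolic substitution $\Theta$ for $\mathrm{sym}(\mathcal{P})$, the following are equivalent: (i) $\langle v;\theta\rangle$ is a fuzzy computed answer (fca) for $\mathcal{Q}$ in the MALP program $\mathcal{P}\Theta$; (ii) there exists a symbolic fuzzy computed answer (sfca) $\langle \mathcal{Q}';\theta'\rangle$ for $\mathcal{Q}$ in $\mathcal{P}$ such that $\langle \mathcal{Q}'\Theta;\theta'\rangle \to_{IS}^{*} \langle v;\theta'\rangle$, where $\theta'$ is a renaming of $\theta$.
   Context: A multi-adjoint lattice is a tuple $\langle L,\preceq,\&_1,\leftarrow_1,\dots,\&_n,\leftarrow_n\rangle$ where $\langle L,\preceq\rangle$ is a bounded complete lattice (bottom $\bot$, top $\top$), each conjunctor $\&_i$ is increasing in both arguments, each implication $\leftarrow_i$ is increasing in its first argument (consequent) and decreasing in its second (antecedent), and each $\langle \&_i,\leftarrow_i\rangle$ is an adjoint pair: for all $x,y,z\in L$, $x\preceq (y\leftarrow_i z)$ iff $(x\,\&_i\, z)\preceq y$. The lattice may also carry further connectives (conjunctions, disjunctions, aggregators); every $n$-ary connective $\varsigma$ of $L$ has a truth function $[\![\varsigma]\!]:L^n\to L$ that is monotone with $[\![\varsigma]\!](\top,\dots,\top)=\top$ and $[\![\varsigma]\!](\bot,\dots,\bot)=\bot$. Formulas: over a signature with variables, function symbols, predicate symbols, truth-degree constants (elements of $L$) and connectives of $L$, a well-formed formula is a value $v\in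 L$, an atom $p(t_1,\dots,t_n)$ with $t_i$ first-order terms, or $\varsigma(e_1,\dots,e_n)$ with $\varsigma$ a connective and $e_i$ formulas. In the symbolic language $\mathcal{L}^s_L$ one additionally allows symbolic values, symbolic adjoint pairs $\langle \&^s,\leftarrow^s\rangle$ and symbolic connectives, which are not defined on $L$ (have no truth function). An $L^s$-expression is a formula built only from values and connectives (concrete or symbolic), i.e. containing no atoms. An sMALP program over $L$ is a set of rules $(H\leftarrow_i \mathcal{B}\ \mathit{with}\ v)$ where $H$ is an atom, $\leftarrow_i$ is the implication of an adjoint pair of $L$ or of a symbolic adjoint pair, the body $\mathcal{B}$ is a formula of $\mathcal{L}^s_L$ without implications, and $v$ is an element of $L$ or a symbolic value. A fact $(H\ \mathit{with}\ v)$ is treated as $(H\leftarrow_i\top\ \mathit{with}\ v)$. A MALP program is an sMALP program with no symbolic values or connectives. A goal is a body formula. $\mathrm{sym}(\mathcal{P})$ is the set of symbolic values and connectives occurring in $\mathcal{P}$. States are pairs $\langle \mathcal{Q};\sigma\rangle$ ($\mathcal{Q}$ a symbolic goal, $\sigma$ a substitution). $\mathcal{Q}[A]$ denotes a formula with a selected atom $A$ in a context; $\mathcal{Q}[A/A']$ replaces it. Admissible steps $\to_{AS}$: (1) $\langle \mathcal{Q}[A];\sigma\rangle \to_{AS} \langle (\mathcal{Q}[A/v\,\&_i\,\mathcal{B}])\theta;\sigma\theta\rangle$ if $\theta=\mathrm{mgu}(\{H=A\})$ exists for a renamed-apart variant $(H\leftarrow_i\mathcal{B}\ \mathit{with}\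 v)$ of a rule of the program (symbolic values/connectives are not renamed), where $\&_i$ is the conjunction adjoint to $\leftarrow_i$ (for facts, $A$ is replaced by $v$ directly); (2) $\langle \mathcal{Q}[A];\sigma\rangle \to_{AS} \langle \mathcal{Q}[A/\bot];\sigma\rangle$ if no rule head unifies with $A$. A final admissible derivation $\langle\mathcal{Q};id\rangle\to_{AS}^*\langle\mathcal{Q}'';\theta\rangle$ is one where $\mathcal{Q}''$ is an $L^s$-expression; then $\langle\mathcal{Q}'';\theta$ restricted to the variables of $\mathcal{Q}\rangle$ is a symbolic admissible computed answer (saca). Interpretive steps $\to_{IS}$: $\langle \mathcal{Q}[\varsigma(r_1,\dots,r_n)];\sigma\rangle \to_{IS} \langle \mathcal{Q}[\varsigma(r_1,\dots,r_n)/r_{n+1}];\sigma\rangle$ where $\varsigma$ is a connective defined on $L$, $r_1,\dots,r_n\in L$, and $[\![\varsigma]\!](r_1,\dots,r_n)=r_{n+1}$. If, starting from a saca, $\langle\mathcal{Q}'';\sigma\rangle\to_{IS}^*\langle\mathcal{Q}';\theta\rangle$ and $\langle\mathcal{Q}';\theta\rangle$ cannot be further reduced, then $\langle\mathcal{Q}';\theta\rangle$ is a symbolic fuzzy computed answer (sfca) for the goal; if moreover $\mathcal{Q}'$ is a value of $L$, it is a fuzzy computed answer (fca). A symbolic substitution is a mapping from symbolic values and symbolic connectives to expressions built from values and connectives of $L$ (of matching kind), subject to: for a symbolic adjoint pair $\langle\&^s,\leftarrow^s\rangle$ and an adjoint pair $\langle\&_i,\leftarrow_i\rangle$ of $L$,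 $\leftarrow^s/\leftarrow_i\in\Theta$ iff $\&^s/\&_i\in\Theta$. For an expression $e$, $e\Theta$ replaces each symbolic symbol by its image; $\mathcal{P}\Theta$ is obtained by replacing every symbolic symbol in $\mathcal{P}$ by its image under $\Theta$ (when $\Theta$ covers $\mathrm{sym}(\mathcal{P})$, $\mathcal{P}\Theta$ is a MALP program). *)

From Stdlib Require Import List Arith.
Import ListNotations.
Set Implicit Arguments.

Record MALattice := {
  Lcar : Type;
  Lle : Lcar -> Lcar -> Prop;
  Lle_refl : forall x, Lle x x;
  Lle_trans : forall x y z, Lle x y -> Lle y z -> Lle x z;
  Lle_antisym : forall x y, Lle x y -> Lle y x -> x = y;
  Lbot : Lcar;
  Ltop : Lcar;
  Lbot_least : forall x, Lle Lbot x;
  Ltop_greatest : forall x, Lle x Ltop;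
  Lsup : forall A : Lcar -> Prop, exists s,
      (forall x, A x -> Lle x s) /\ (forall u, (forall x, A x -> Lle x u) -> Lle s u);
  Linf : forall A : Lcar -> Prop, exists s,
      (forall x, A x -> Lle s x) /\ (forall u, (forall x, A x -> Lle u x) -> Lle u s);
  (* finitely many adjoint pairs <&_i, <-_i>, indexed by Ladj *)
  Ladj : Type;
  Ladj_finite : exists l : list Ladj, forall i, In i l;
  Lconj : Ladj -> Lcar -> Lcar -> Lcar;
  (* Limpl i y z  is  (y <-_i z): y consequent, z antecedent *)
  Limpl : Ladj -> Lcar -> Lcar -> Lcar;
  Lconj_mono : forall i x x' y y', Lle x x' -> Lle y y' -> Lle (Lconj i x y) (Lconj i x' y');
  Limpl_mono : forall i y y' z z', Lle y y' -> Lle z' z -> Lle (Limpl i y z) (Limpl i y' z');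
  Ladjoint : forall i x y z, Lle x (Limpl i y z) <-> Lle (Lconj i x z) y;
  Lconn : Type;
  Larity : Lconn -> nat;
  Ltruth : Lconn -> list Lcar -> Lcar;
  Ltruth_mono : forall c xs ys, length xs = Larity c -> length ys = Larity c ->
      Forall2 Lle xs ys -> Lle (Ltruth c xs) (Ltruth c ys);
  Ltruth_top : forall c, Ltruth c (repeat Ltop (Larity c)) = Ltop;
  Ltruth_bot : forall c, Ltruth c (repeat Lbot (Larity c)) = Lbot
}.

(* Symbolic signature: symbolic values, symbolic connectives (with arity),
   symbolic adjoint pairs. *)
Record ssig := {
  SV : Type;
  SC : Type;
  sc_arity : SC -> nat;
  SA : Type
}.

Inductive term := Var (x : nat) | Fn (f : nat) (args : list term).

Definition subst := nat -> term.

Fixpoint tsubst (s : subst) (t : term) : term :=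
  match t with Var x => s x | Fn f ts => Fn f (map (tsubst s) ts) end.

Fixpoint tvars (t : term) : list nat :=
  match t with Var x => [x] | Fn _ ts => flat_map tvars ts end.

(* sigma theta : first sigma, then theta *)
Definition compose (s t : subst) : subst := fun x => tsubst t (s x).

Definition restrict (s : subst) (V : list nat) : subst :=
  fun x => if existsb (Nat.eqb x) V then s x else Var x.

Definition bijective (r : nat -> nat) : Prop :=
  exists r', forall x, r' (r x) = x /\ r (r' x) = x.

Definition rsubst (r : nat -> nat) : subst := fun x => Var (r x).

Definition subst_var (s : subst) (x : nat) : Prop :=
  s x <> Var x \/ exists y, s y <> Var y /\ In x (tvars (s y)).

Definition atom := (nat * list term)%type.

Definition asubst (s : subst) (a : atom) : atom := (fst a, map (tsubst s) (snd a)).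

Definition is_unifier (s : subst) (a b : atom) : Prop := asubst s a = asubst s b.

Definition is_mgu (s : subst) (a b : atom) : Prop :=
  is_unifier s a b /\
  (forall s', is_unifier s' a b -> exists d, forall x, s' x = tsubst d (s x)) /\
  (forall x, tsubst s (s x) = s x).

Inductive value (L : MALattice) (S : ssig) :=
  | VConc (r : Lcar L) | VSym (s : SV S).
Arguments VConc {L S}. Arguments VSym {L S}.

Inductive cconn (L : MALattice) := CA (i : Ladj L) | CO (c : Lconn L).
Arguments CA {L}. Arguments CO {L}.

Definition ccarity (L : MALattice) (c : cconn L) : nat :=
  match c with CA _ => 2 | CO c => Larity L c end.

Definition ctruth (L : MALattice) (c : cconn L) (rs : list (Lcar L)) : Lcar L :=
  match c with
  | CA i => match rs with [x; y] => Lconj L i x y | _ => Lbot L end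
  | CO c => Ltruth L c rs
  end.

(* connective symbols: concrete, symbolic connective, symbolic conjunction &^s *)
Inductive csym (L : MALattice) (S : ssig) :=
  | Conc (c : cconn L) | SymC (s : SC S) | SymA (s : SA S).
Arguments Conc {L S}. Arguments SymC {L S}. Arguments SymA {L S}.

Definition carity (L : MALattice) (S : ssig) (c : csym L S) : nat :=
  match c with Conc c => ccarity c | SymC s => sc_arity S s | SymA _ => 2 end.

Inductive formula (L : MALattice) (S : ssig) :=
  | FVal (v : value L S)
  | FAtom (p : nat) (ts : list term)
  | FConn (c : csym L S) (args : list (formula L S)).
Arguments FVal {L S}. Arguments FAtom {L S}. Arguments FConn {L S}.

Fixpoint wf_formula {L S} (f : formula L S) : bool :=
  match f with
  | FVal _ => true
  | FAtom _ _ => true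
  | FConn c args => Nat.eqb (length args) (carity c) && forallb wf_formula args
  end.

Fixpoint has_atom {L S} (f : formula L S) : bool :=
  match f with
  | FVal _ => false
  | FAtom _ _ => true
  | FConn _ args => existsb has_atom args
  end.

Definition lexpr {L S} (f : formula L S) : Prop := has_atom f = false.

Fixpoint fsubst {L S} (s : subst) (f : formula L S) : formula L S :=
  match f with
  | FVal v => FVal v
  | FAtom p ts => FAtom p (map (tsubst s) ts)
  | FConn c args => FConn c (map (fsubst s) args)
  end.

Fixpoint fvars {L S} (f : formula L S) : list nat :=
  match f with
  | FVal _ => []
  | FAtom _ ts => flat_map tvars ts
  | FConn _ args => flat_map fvars args
  end.

Definition v_sv {L S} (v : value L S) : list (SV S) :=
  match v with VSym s => [s] | _ => [] end.

Fixpoint f_sv {L S} (f : formula L S) : list (SV S) :=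
  match f with
  | FVal v => v_sv v
  | FAtom _ _ => []
  | FConn _ args => flat_map f_sv args
  end.

Definition c_sc {L S} (c : csym L S) : list (SC S) :=
  match c with SymC s => [s] | _ => [] end.
Definition c_sa {L S} (c : csym L S) : list (SA S) :=
  match c with SymA s => [s] | _ => [] end.

Fixpoint f_sc {L S} (f : formula L S) : list (SC S) :=
  match f with
  | FConn c args => c_sc c ++ flat_map f_sc args
  | _ => []
  end.

Fixpoint f_sa {L S} (f : formula L S) : list (SA S) :=
  match f with
  | FConn c args => c_sa c ++ flat_map f_sa args
  | _ => []
  end.

Definition nosym {L S} (f : formula L S) : Prop :=
  f_sv f = [] /\ f_sc f = [] /\ f_sa f = [].

Inductive ctx (L : MALattice) (S : ssig) :=
  | Hole
  | CCtx (c : csym L S) (l : list (formula L S)) (C : ctx L S) (r : list (formula L S)).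
Arguments Hole {L S}. Arguments CCtx {L S}.

Fixpoint fill {L S} (C : ctx L S) (f : formula L S) : formula L S :=
  match C with
  | Hole => f
  | CCtx c l C' r => FConn c (l ++ fill C' f :: r)
  end.

Inductive adjsym (L : MALattice) (S : ssig) := AConc (i : Ladj L) | ASym (s : SA S).
Arguments AConc {L S}. Arguments ASym {L S}.

Definition adj_conj {L S} (a : adjsym L S) : csym L S :=
  match a with AConc i => Conc (CA i) | ASym s => SymA s end.

(* Rule p ts a B w  is  (p(ts) <-_a B with w);  Fact p ts w  is  (p(ts) with w) *)
Inductive rule (L : MALattice) (S : ssig) :=
  | Rule (p : nat) (ts : list term) (a : adjsym L S) (B : formula L S) (w : value L S)
  | Fact (p : nat) (ts : list term) (w : value L S).
Arguments Rule {L S}. Arguments Fact {L S}.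

Definition program (L : MALattice) (S : ssig) := list (rule L S).

Definition head {L S} (R : rule L S) : atom :=
  match R with Rule p ts _ _ _ => (p, ts) | Fact p ts _ => (p, ts) end.

Definition rule_vars {L S} (R : rule L S) : list nat :=
  match R with
  | Rule _ ts _ B _ => flat_map tvars ts ++ fvars B
  | Fact _ ts _ => flat_map tvars ts
  end.

Definition rsubst_rule {L S} (s : subst) (R : rule L S) : rule L S :=
  match R with
  | Rule p ts a B w => Rule p (map (tsubst s) ts) a (fsubst s B) w
  | Fact p ts w => Fact p (map (tsubst s) ts) w
  end.

(* what the selected atom is replaced by: v &_i B, or v for facts *)
Definition replacement {L S} (R : rule L S) : formula L S :=
  match R with
  | Rule _ _ a B w => FConn (adj_conj a) [FVal w; B]
  | Fact _ _ w => FVal w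
  end.

Definition wf_rule {L S} (R : rule L S) : Prop :=
  match R with Rule _ _ _ B _ => wf_formula B = true | Fact _ _ _ => True end.

Definition wf_program {L S} (P : program L S) : Prop := forall R, In R P -> wf_rule R.

Definition r_sv {L S} (R : rule L S) : list (SV S) :=
  match R with Rule _ _ _ B w => v_sv w ++ f_sv B | Fact _ _ w => v_sv w end.
Definition r_sc {L S} (R : rule L S) : list (SC S) :=
  match R with Rule _ _ _ B _ => f_sc B | Fact _ _ _ => [] end.
Definition r_sa {L S} (R : rule L S) : list (SA S) :=
  match R with
  | Rule _ _ a B _ => match a with ASym s => [s] | AConc _ => [] end ++ f_sa B
  | Fact _ _ _ => []
  end.

Definition state (L : MALattice) (S : ssig) := (formula L S * subst)%type.

Definition renamed_apart {L S} (r : nat -> nat) (R : rule L S) (Q : formula L S)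
    (sg : subst) : Prop :=
  bijective r /\
  forall x, In x (rule_vars (rsubst_rule (rsubst r) R)) ->
    ~ In x (fvars Q) /\ ~ subst_var sg x.

Inductive as_step {L S} (P : program L S) : state L S -> state L S -> Prop :=
  | as_rule : forall C p ts sg R r th,
      In R P ->
      renamed_apart r R (fill C (FAtom p ts)) sg ->
      is_mgu th (head (rsubst_rule (rsubst r) R)) (p, ts) ->
      as_step P (fill C (FAtom p ts), sg)
        (fsubst th (fill C (replacement (rsubst_rule (rsubst r) R))), compose sg th)
  | as_fail : forall C p ts sg,
      (forall R r th, In R P -> renamed_apart r R (fill C (FAtom p ts)) sg ->
         ~ is_unifier th (head (rsubst_rule (rsubst r) R)) (p, ts)) ->
      as_step P (fill C (FAtom p ts), sg) (fill C (FVal (VConc (Lbot L))), sg).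

Inductive is_step {L S} : state L S -> state L S -> Prop :=
  | is_conn : forall C (c : cconn L) rs sg,
      length rs = ccarity c ->
      is_step (fill C (FConn (Conc c) (map (fun r => FVal (VConc r)) rs)), sg)
              (fill C (FVal (VConc (ctruth c rs))), sg).

Inductive star {A} (R : A -> A -> Prop) : A -> A -> Prop :=
  | star_refl : forall x, star R x x
  | star_step : forall x y z, R x y -> star R y z -> star R x z.

Definition saca {L S} (P : program L S) (Q Q'' : formula L S) (th : subst) : Prop :=
  exists sg, star (as_step P) (Q, Var) (Q'', sg) /\ lexpr Q'' /\
    forall x, th x = restrict sg (fvars Q) x.

Definition sfca {L S} (P : program L S) (Q Q' : formula L S) (th : subst) : Prop :=
  exists Q'', saca P Q Q'' th /\ star is_step (Q'', th) (Q', th) /\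
    ~ (exists st, is_step (Q', th) st).

Definition fca {L S} (P : program L S) (Q : formula L S) (v : Lcar L) (th : subst) : Prop :=
  sfca P Q (FVal (VConc v)) th.

(* partial maps; a symbolic adjoint pair is mapped as a whole to an adjoint pair
   of L (so <-^s/<-_i in Theta iff &^s/&_i in Theta) *)
Record ssubst (L : MALattice) (S : ssig) := {
  sv_map : SV S -> option (Lcar L);
  sc_map : SC S -> option (cconn L);
  sc_map_arity : forall s c, sc_map s = Some c -> ccarity c = sc_arity S s;
  sa_map : SA S -> option (Ladj L)
}.

Definition vapply {L S} (T : ssubst L S) (v : value L S) : value L S :=
  match v with
  | VSym s => match sv_map T s with Some r => VConc r | None => v end
  | _ => v
  end.

Definition capply {L S} (T : ssubst L S) (c : csym L S) : csym L S :=
  match c with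
  | SymC s => match sc_map T s with Some c' => Conc c' | None => c end
  | SymA s => match sa_map T s with Some i => Conc (CA i) | None => c end
  | _ => c
  end.

Definition aapply {L S} (T : ssubst L S) (a : adjsym L S) : adjsym L S :=
  match a with
  | ASym s => match sa_map T s with Some i => AConc i | None => a end
  | _ => a
  end.

Fixpoint fapply {L S} (T : ssubst L S) (f : formula L S) : formula L S :=
  match f with
  | FVal v => FVal (vapply T v)
  | FAtom p ts => FAtom p ts
  | FConn c args => FConn (capply T c) (map (fapply T) args)
  end.

Definition rapply {L S} (T : ssubst L S) (R : rule L S) : rule L S :=
  match R with
  | Rule p ts a B w => Rule p ts (aapply T a) (fapply T B) (vapply T w)
  | Fact p ts w => Fact p ts (vapply T w)
  end.

Definition papply {L S} (T : ssubst L S) (P : program L S) : program L S :=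
  map (rapply T) P.

(* Theta is a symbolic substitution for sym(P) *)
Definition covers {L S} (T : ssubst L S) (P : program L S) : Prop :=
  forall R, In R P ->
    (forall s, In s (r_sv R) -> sv_map T s <> None) /\
    (forall s, In s (r_sc R) -> sc_map T s <> None) /\
    (forall s, In s (r_sa R) -> sa_map T s <> None).

Definition renaming_of (th' th : subst) (V : list nat) : Prop :=
  exists r, bijective r /\ forall x, In x V -> th' x = tsubst (rsubst r) (th x).

(* Applying a symbolic substitution Theta to the states of a derivation is a
   bisimulation between admissible steps in P and in P Theta: Theta only touches
   truth values and connectives, never atoms, rule heads or variables, so the
   same atom is selected, the same rule (renamed the same way) applies with the
   same mgu, and a failing atom fails in both programs.  Interpretive steps
   commute with Theta as well, and every interpretive reduction preserves the
   normal form [interp] it eventually reaches.  So an fca of P Theta is the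
   Theta-image of a saca of P whose interpretive normal form is the wanted sfca,
   and conversely; the computed substitution is the same in both programs. *)
From Pilot Require Import Defs.
From Stdlib Require Import List Arith.
Import ListNotations.

Fixpoint formula_ind_nested {L S} (Pr : formula L S -> Prop)
  (hv : forall v, Pr (FVal v)) (ha : forall p ts, Pr (FAtom p ts))
  (hc : forall c args, Forall Pr args -> Pr (FConn c args)) (f : formula L S) : Pr f :=
  match f with
  | FVal v => hv v
  | FAtom p ts => ha p ts
  | FConn c args => hc c args
      ((fix go (l : list (formula L S)) : Forall Pr l :=
          match l with
          | [] => Forall_nil _
          | a :: l' => Forall_cons _ (formula_ind_nested Pr hv ha hc a) (go l')
          end) args)
  end.

Fixpoint tsubst_Var (t : term) : tsubst Var t = t :=
  match t with
  | Var x => eq_refl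
  | Fn f ts => f_equal (Fn f)
      ((fix go (l : list term) : map (tsubst Var) l = l :=
          match l with
          | [] => eq_refl
          | a :: l' => f_equal2 (@cons term) (tsubst_Var a) (go l')
          end) ts)
  end.

Lemma renaming_of_refl (th : subst) (V : list nat) : renaming_of th th V.
Proof.
  exists (fun x => x). split.
  - exists (fun x => x). auto.
  - intros x _. symmetry. apply tsubst_Var.
Qed.

Lemma star_trans {A} (R : A -> A -> Prop) x y z : star R x y -> star R y z -> star R x z.
Proof. induction 1; eauto using star_step. Qed.

Lemma star_map {A B} (R : A -> A -> Prop) (R' : B -> B -> Prop) (f : A -> B) :
  (forall x y, R x y -> R' (f x) (f y)) ->
  forall x y, star R x y -> star R' (f x) (f y).
Proof. intros Hf x y; induction 1; eauto using star_refl, star_step. Qed.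

Lemma star_lift {A B} (R : A -> A -> Prop) (R' : B -> B -> Prop) (f : A -> B) :
  (forall x y', R' (f x) y' -> exists y, R x y /\ f y = y') ->
  forall x y', star R' (f x) y' -> exists y, star R x y /\ f y = y'.
Proof.
  intros Hf x y' H. remember (f x) as fx eqn:Efx. revert x Efx.
  induction H as [z|z1 z2 z3 H12 _ IH]; intros x ->.
  - exists x. split; [apply star_refl | reflexivity].
  - destruct (Hf x z2 H12) as [y [Hxy <-]].
    destruct (IH y eq_refl) as [w [Hyw <-]].
    exists w. split; [eapply star_step; eauto | reflexivity].
Qed.

Section Instance.
Context {L : MALattice} {S : ssig}.
Variable T : ssubst L S.

Lemma fapply_nosym (f : formula L S) : nosym f -> fapply T f = f.
Proof.
  induction f as [v|p ts|c args IH] using formula_ind_nested; unfold nosym; simpl.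
  - destruct v; simpl; intros [H _]; [reflexivity | discriminate].
  - reflexivity.
  - intros [Hsv [Hsc Hsa]].
    apply app_eq_nil in Hsc as [Hc Hsc]. apply app_eq_nil in Hsa as [Ha Hsa].
    f_equal.
    + destruct c; simpl in *; congruence.
    + induction IH as [|a l Ha' _ IHl]; simpl in *; [reflexivity|].
      apply app_eq_nil in Hsv as [Av Bv]. apply app_eq_nil in Hsc as [Ac Bc].
      apply app_eq_nil in Hsa as [Aa Ba].
      f_equal; [apply Ha'; repeat split | apply IHl]; auto.
Qed.

Lemma fvars_fapply (f : formula L S) : fvars (fapply T f) = fvars f.
Proof.
  induction f as [| |c args IH] using formula_ind_nested; simpl; auto.
  induction IH; simpl; congruence.
Qed.

Lemma has_atom_fapply (f : formula L S) : has_atom (fapply T f) = has_atom f.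
Proof.
  induction f as [| |c args IH] using formula_ind_nested; simpl; auto.
  induction IH; simpl; congruence.
Qed.

Lemma lexpr_fapply (f : formula L S) : lexpr (fapply T f) <-> lexpr f.
Proof. unfold lexpr. rewrite has_atom_fapply. tauto. Qed.

Lemma fapply_fsubst (s : subst) (f : formula L S) :
  fapply T (fsubst s f) = fsubst s (fapply T f).
Proof.
  induction f as [| |c args IH] using formula_ind_nested; simpl; auto.
  f_equal. rewrite !map_map. induction IH; simpl; congruence.
Qed.

Fixpoint capply_ctx (C : ctx L S) : ctx L S :=
  match C with
  | Hole => Hole
  | CCtx c l C' r => CCtx (capply T c) (map (fapply T) l) (capply_ctx C') (map (fapply T) r)
  end.

Lemma fapply_fill (C : ctx L S) (f : formula L S) :
  fapply T (fill C f) = fill (capply_ctx C) (fapply T f).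
Proof. induction C; simpl; auto. rewrite map_app. simpl. congruence. Qed.

Lemma fapply_eq_fill_atom (C : ctx L S) p ts (F : formula L S) :
  fapply T F = fill C (FAtom p ts) ->
  exists C0, F = fill C0 (FAtom p ts) /\ capply_ctx C0 = C.
Proof.
  revert F. induction C as [|c l C IH r]; intros F H; simpl in *.
  - exists Hole. destruct F; simpl in *; try discriminate. split; congruence.
  - destruct F as [| |c0 args]; simpl in *; try discriminate.
    injection H as Hc Ha.
    apply map_eq_app in Ha as [l1 [l2 [-> [<- Ha]]]].
    apply map_eq_cons in Ha as [a [tl [-> [Ea <-]]]].
    destruct (IH a Ea) as [C1 [-> <-]].
    exists (CCtx c0 l1 C1 tl). simpl. split; congruence.
Qed.

Lemma head_rapply (s : subst) (R : rule L S) :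
  Defs.head (rsubst_rule s (rapply T R)) = Defs.head (rsubst_rule s R).
Proof. destruct R; reflexivity. Qed.

Lemma replacement_rapply (s : subst) (R : rule L S) :
  replacement (rsubst_rule s (rapply T R)) = fapply T (replacement (rsubst_rule s R)).
Proof.
  destruct R as [p ts a B w|p ts w]; simpl; auto.
  rewrite fapply_fsubst. destruct a as [|sa]; simpl; auto.
  destruct (sa_map T sa); reflexivity.
Qed.

Lemma renamed_apart_rapply r (R : rule L S) C p ts sg :
  renamed_apart r (rapply T R) (fill (capply_ctx C) (FAtom p ts)) sg <->
  renamed_apart r R (fill C (FAtom p ts)) sg.
Proof.
  assert (Ev : fvars (fill (capply_ctx C) (@FAtom L S p ts)) = fvars (fill C (FAtom p ts))).
  { change (@FAtom L S p ts) with (fapply T (@FAtom L S p ts) : formula L S).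
    rewrite <- fapply_fill. apply fvars_fapply. }
  assert (Er : forall s, rule_vars (rsubst_rule s (rapply T R)) = rule_vars (rsubst_rule s R)).
  { intros s. destruct R; simpl; auto. rewrite <- fapply_fsubst, fvars_fapply. reflexivity. }
  unfold renamed_apart. rewrite Er, Ev. tauto.
Qed.

Definition sapply (st : state L S) : state L S := (fapply T (fst st), snd st).

Lemma as_step_sapply (P : program L S) st1 st2 :
  as_step P st1 st2 -> as_step (papply T P) (sapply st1) (sapply st2).
Proof.
  unfold sapply. intros [C p ts sg R r th HR Hra Hm | C p ts sg Hfail]; simpl;
    rewrite ?fapply_fsubst, !fapply_fill, <- ?replacement_rapply; simpl.
  - apply as_rule.
    + apply in_map, HR.
    + apply renamed_apart_rapply, Hra.
    + rewrite head_rapply. exact Hm.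
  - apply as_fail. intros R' r th HR' Hra.
    apply in_map_iff in HR' as [R [<- HR]].
    rewrite head_rapply. apply (Hfail R r th HR), (renamed_apart_rapply r R C p ts sg), Hra.
Qed.

Lemma as_step_papply_inv (P : program L S) st1 st2' :
  as_step (papply T P) (sapply st1) st2' ->
  exists st2, as_step P st1 st2 /\ sapply st2 = st2'.
Proof.
  destruct st1 as [F sg0]. unfold sapply. simpl.
  remember (fapply T F, sg0) as st1' eqn:Est. intros H.
  destruct H as [C p ts sg R' r th HR' Hra Hm | C p ts sg Hfail];
    injection Est as HF <-;
    destruct (fapply_eq_fill_atom C p ts F (eq_sym HF)) as [C0 [-> <-]].
  - apply in_map_iff in HR' as [R [<- HR]].
    eexists. split.
    + apply as_rule; eauto.
      * apply (renamed_apart_rapply r R C0 p ts sg), Hra.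
      * rewrite <- (head_rapply (rsubst r) R). exact Hm.
    + simpl. rewrite fapply_fsubst, fapply_fill, replacement_rapply. reflexivity.
  - eexists. split.
    + apply as_fail. intros R r th0 HR Hra.
      rewrite <- (head_rapply (rsubst r) R).
      apply Hfail; [apply in_map, HR | apply renamed_apart_rapply, Hra].
    + simpl. rewrite fapply_fill. reflexivity.
Qed.

Lemma is_step_sapply st1 st2 : is_step st1 st2 -> is_step (sapply st1) (sapply st2).
Proof.
  unfold sapply. destruct 1. simpl. rewrite !fapply_fill. simpl. rewrite map_map.
  apply is_conn; auto.
Qed.

End Instance.

Section Interpretation.
Context {L : MALattice} {S : ssig}.

Definition cval (r : Lcar L) : formula L S := FVal (VConc r).

Fixpoint as_values (l : list (formula L S)) : option (list (Lcar L)) :=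
  match l with
  | [] => Some []
  | FVal (VConc r) :: l' => option_map (cons r) (as_values l')
  | _ => None
  end.

Lemma as_values_map_cval rs : as_values (map cval rs) = Some rs.
Proof. induction rs as [|r rs IH]; simpl; rewrite ?IH; reflexivity. Qed.

Lemma as_values_Some l rs : as_values l = Some rs -> l = map cval rs.
Proof.
  revert rs; induction l as [|a l IH]; simpl; intros rs H.
  - injection H as <-. reflexivity.
  - destruct a as [[r|]| |]; try discriminate.
    destruct (as_values l) as [rs'|]; simpl in H; try discriminate.
    injection H as <-. simpl. rewrite (IH rs' eq_refl). reflexivity.
Qed.

Definition interp_node (c : csym L S) (args : list (formula L S)) : formula L S :=
  match c, as_values args with
  | Conc c0, Some rs =>
      if Nat.eqb (length rs) (ccarity c0) then cval (ctruth c0 rs) else FConn c args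
  | _, _ => FConn c args
  end.

Fixpoint interp (f : formula L S) : formula L S :=
  match f with
  | FConn c args => interp_node c (map interp args)
  | _ => f
  end.

Lemma interp_node_cval c rs :
  length rs = ccarity c -> interp_node (Conc c) (map cval rs) = cval (ctruth c rs).
Proof.
  intros Hl. unfold interp_node. rewrite as_values_map_cval.
  apply Nat.eqb_eq in Hl. rewrite Hl. reflexivity.
Qed.

Lemma interp_node_FConn c c' args args' :
  interp_node c args = FConn c' args' ->
  c' = c /\ args' = args /\
  forall c0 rs, c = Conc c0 -> args = map cval rs -> length rs <> ccarity c0.
Proof.
  unfold interp_node. intros H.
  assert (Hstuck : forall c0 rs, c = Conc c0 -> args = map cval rs -> length rs <> ccarity c0).
  { intros c0 rs -> ->. rewrite as_values_map_cval in H.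
    destruct (Nat.eqb (length rs) (ccarity c0)) eqn:E; [discriminate|].
    apply Nat.eqb_neq, E. }
  destruct c as [c0| |], (as_values args) as [rs|];
    try destruct (Nat.eqb (length rs) (ccarity c0)); try discriminate;
    injection H as <- <-; auto.
Qed.

Lemma interp_fill (C : ctx L S) a b : interp a = interp b -> interp (fill C a) = interp (fill C b).
Proof. intros H; induction C; simpl; auto. rewrite !map_app. simpl. congruence. Qed.

Lemma star_is_interp (st1 st2 : state L S) :
  star is_step st1 st2 -> interp (fst st1) = interp (fst st2).
Proof.
  induction 1 as [|st1 st2 st3 H _ IH]; auto. rewrite <- IH.
  destruct H as [C c rs sg Hl]. simpl. apply interp_fill. simpl.
  rewrite map_map. apply (interp_node_cval c rs Hl).
Qed.

Fixpoint ccomp (C C' : ctx L S) : ctx L S :=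
  match C with Hole => C' | CCtx c l C1 r => CCtx c l (ccomp C1 C') r end.

Lemma fill_ccomp (C C' : ctx L S) (f : formula L S) : fill C (fill C' f) = fill (ccomp C C') f.
Proof. induction C; simpl; congruence. Qed.

Lemma star_is_fill (C : ctx L S) (a b : formula L S) sg :
  star is_step (a, sg) (b, sg) -> star is_step (fill C a, sg) (fill C b, sg).
Proof.
  apply (star_map is_step is_step (fun st => (fill C (fst st), snd st))).
  intros x y [C' c rs sg' Hl]. simpl. rewrite !fill_ccomp. apply is_conn, Hl.
Qed.

Lemma star_is_args c (g : formula L S -> formula L S) args sg :
  Forall (fun a => star is_step (a, sg) (g a, sg)) args ->
  forall l, star is_step (FConn c (l ++ args), sg) (FConn c (l ++ map g args), sg).
Proof.
  induction 1 as [|a args Ha _ IH]; intros l; simpl; [apply star_refl|].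
  apply star_trans with (FConn c (l ++ g a :: args), sg).
  - apply (star_is_fill (CCtx c l Hole args)), Ha.
  - specialize (IH (l ++ [g a])). rewrite <- !app_assoc in IH. exact IH.
Qed.

Lemma star_is_to_interp (f : formula L S) sg : star is_step (f, sg) (interp f, sg).
Proof.
  induction f as [| |c args IH] using formula_ind_nested; simpl; try apply star_refl.
  apply star_trans with (FConn c (map interp args), sg).
  - apply (star_is_args c interp args sg IH []).
  - unfold interp_node. destruct c as [c0| |]; try apply star_refl.
    destruct (as_values (map interp args)) as [rs|] eqn:E; try apply star_refl.
    destruct (Nat.eqb (length rs) (ccarity c0)) eqn:Hl; try apply star_refl.
    apply as_values_Some in E. rewrite E. apply Nat.eqb_eq in Hl.
    eapply star_step; [apply (is_conn Hole c0 rs sg Hl) | apply star_refl].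
Qed.

Lemma interp_neq_redex (C : ctx L S) c rs (f : formula L S) :
  length rs = ccarity c -> interp f <> fill C (FConn (Conc c) (map cval rs)).
Proof.
  intros Hl. revert f. induction C as [|c1 l C IH r]; intros f Hf; simpl in Hf;
    destruct f as [| |c' args]; simpl in Hf; try discriminate;
    apply interp_node_FConn in Hf as [<- [Eargs Hstuck]].
  - exact (Hstuck c rs eq_refl (eq_sym Eargs) Hl).
  - symmetry in Eargs. apply map_eq_app in Eargs as [l1 [l2 [_ [_ E]]]].
    apply map_eq_cons in E as [a [tl [_ [Ea _]]]].
    eapply IH; eauto.
Qed.

Lemma interp_irreducible (f : formula L S) sg : ~ exists st, is_step (interp f, sg) st.
Proof.
  intros [st H]. remember (interp f, sg) as st0 eqn:E.
  destruct H as [C c rs sg' Hl]. injection E as E _.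
  exact (interp_neq_redex C c rs f Hl (eq_sym E)).
Qed.

Lemma FVal_irreducible (v : value L S) sg : ~ exists st, is_step (FVal v, sg) st.
Proof.
  intros [st H]. remember (FVal v, sg) as st0 eqn:E.
  destruct H as [C c rs sg' Hl]. injection E as E _. destruct C; discriminate.
Qed.

End Interpretation.

Section Answers.
Context {L : MALattice} {S : ssig}.
Variables (T : ssubst L S) (P : program L S) (Q : formula L S).
Hypothesis fapply_Q : fapply T Q = Q.

Lemma saca_papply Q'' th : saca P Q Q'' th -> saca (papply T P) Q (fapply T Q'') th.
Proof.
  intros [sg [Hst [Hlex Hth]]]. exists sg. split; [|split; auto].
  - apply (star_map _ _ (sapply T) (as_step_sapply T P)) in Hst.
    unfold sapply in Hst. simpl in Hst. rewrite fapply_Q in Hst. exact Hst.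
  - apply lexpr_fapply, Hlex.
Qed.

Lemma saca_papply_inv Q'' th : saca (papply T P) Q Q'' th ->
  exists F, saca P Q F th /\ fapply T F = Q''.
Proof.
  intros [sg [Hst [Hlex Hth]]].
  replace (Q, Var) with (sapply T (Q, Var)) in Hst
    by (unfold sapply; simpl; rewrite fapply_Q; reflexivity).
  destruct (star_lift _ _ (sapply T) (as_step_papply_inv T P) _ _ Hst)
    as [[F sg'] [HstP HF]].
  injection HF as HF ->. exists F. split; [|exact HF].
  exists sg. split; [exact HstP|split; auto]. apply (lexpr_fapply T). rewrite HF. exact Hlex.
Qed.

(* The sfca is the interpretive normal form of the symbolic saca: instantiating it
   and interpreting further lands where the instance of the saca is interpreted to. *)
Lemma sfca_of_fca_papply v th : fca (papply T P) Q v th ->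
  exists Q', sfca P Q Q' th /\ star is_step (fapply T Q', th) (FVal (VConc v), th).
Proof.
  intros [Q'' [Hsaca [Hv _]]].
  destruct (saca_papply_inv Q'' th Hsaca) as [F [HsacaP <-]].
  exists (interp F). split.
  - exists F. split; [exact HsacaP|split].
    + apply star_is_to_interp.
    + apply interp_irreducible.
  - assert (Hnf : interp (fapply T (interp F)) = FVal (VConc v)).
    { pose proof (star_map _ _ (sapply T) (is_step_sapply T) _ _ (star_is_to_interp F th))
        as Hinst.
      apply star_is_interp in Hinst, Hv. simpl in Hinst, Hv. congruence. }
    rewrite <- Hnf. apply star_is_to_interp.
Qed.

Lemma fca_papply_of_sfca Q' v th : sfca P Q Q' th ->
  star is_step (fapply T Q', th) (FVal (VConc v), th) -> fca (papply T P) Q v th.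
Proof.
  intros [Q'' [Hsaca [HQ' _]]] Hv. exists (fapply T Q''). split; [|split].
  - apply saca_papply, Hsaca.
  - apply star_trans with (fapply T Q', th); [|exact Hv].
    exact (star_map _ _ (sapply T) (is_step_sapply T) _ _ HQ').
  - apply FVal_irreducible.
Qed.

End Answers.

Theorem theorem1 (L : MALattice) (S : ssig) (P : program L S) (Q : formula L S)
  (T : ssubst L S) :
  wf_program P -> wf_formula Q = true -> nosym Q -> covers T P ->
  forall v : Lcar L,
    (forall th : subst, fca (papply T P) Q v th ->
       exists (Q' : formula L S) (th' : subst),
         sfca P Q Q' th' /\
         star is_step (fapply T Q', th') (FVal (VConc v), th') /\
         renaming_of th' th (fvars Q)) /\
    (forall (Q' : formula L S) (th' : subst),
       sfca P Q Q' th' ->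
       star is_step (fapply T Q', th') (FVal (VConc v), th') ->
       exists th : subst, fca (papply T P) Q v th /\ renaming_of th' th (fvars Q)).
Proof.
  intros _ _ HQ _ v. pose proof (fapply_nosym T Q HQ) as fapply_Q. split.
  - intros th Hfca.
    destruct (sfca_of_fca_papply T P Q fapply_Q v th Hfca) as [Q' [Hsfca Hv]].
    exists Q', th. split; [exact Hsfca|split; [exact Hv|apply renaming_of_refl]].
  - intros Q' th Hsfca Hv. exists th. split; [|apply renaming_of_refl].
    exact (fca_papply_of_sfca T P Q fapply_Q Q' v th Hsfca Hv).
Qed.
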